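(* Let $n\ge 1$ and let $A_1,\dots,A_n$ be real orthogonal $n\times n$ matrices such that $A_1=\mathbb{1}_n$ (the identity) and $A_iA_j+A_jA_i=-2\delta_{i,j}\mathbb{1}_n$ for all $i,j\in\{2,\dots,n\}$. For $x,y\in\mathcal{S}^{n-1}$ define $\alpha_i(x,y)=(A_ix\,|\,y)$ and $$M(x,y)=\sum_{i=1}^n\alpha_i(x,y)A_i.$$ Then $M$ is a continuous map from $\mathcal{S}^{n-1}\times\mathcal{S}^{n-1}$ to the orthogonal group $O(n)$, and $M(x,y)\,x=y$ for all $x,y\in\mathcal{S}^{n-1}$.
   Context: $\mathcal{S}^{n-1}$ is the unit sphere of $\mathbb{R}^n$, $(\cdot|\cdot)$ is the standard Euclidean inner product on $\mathbb{R}^n$, and $\delta_{i,j}$ is the Kronecker delta. (Such families exist for $n=2,4,8$.) *)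

From HB Require Import structures.
From mathcomp Require Import all_boot all_order all_algebra.
From mathcomp Require Import all_classical all_reals all_analysis.
Set Implicit Arguments. Unset Strict Implicit. Unset Printing Implicit Defensive.
Import Order.TTheory GRing.Theory Num.Theory.
Local Open Scope ring_scope.

Definition inner (R : realType) (n : nat) (u v : 'cV[R]_n) : R :=
  \sum_(k < n) u k 0 * v k 0.

Definition sphere (R : realType) (n : nat) : set 'cV[R]_n :=
  [set x | inner x x = 1].

Definition orthogonal_mx (R : realType) (n : nat) (A : 'M[R]_n) : Prop :=
  A^T *m A = 1%:M.

Definition alpha (R : realType) (n : nat) (A : 'I_n -> 'M[R]_n) (i : 'I_n)
  (x y : 'cV[R]_n) : R := inner (A i *m x) y.

Definition Mmap (R : realType) (n : nat) (A : 'I_n -> 'M[R]_n)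
  (p : 'cV[R]_n * 'cV[R]_n) : 'M[R]_n :=
  \sum_(i < n) alpha A i p.1 p.2 *: A i.

From HB Require Import structures.
From mathcomp Require Import all_boot all_order all_algebra.
From mathcomp Require Import all_classical all_reals all_analysis.
Import Order.TTheory GRing.Theory Num.Theory.
Import numFieldNormedType.Exports.
Local Open Scope classical_set_scope.
Local Open Scope ring_scope.

(* For a unit vector x, the anticommutation relations make A_1 x, ..., A_n x an
   orthonormal basis, so the matrix P with these columns is orthogonal and
   M(x, y) x = P P^T y = y.  Orthogonality of M(x, y) follows from the same
   relations in the form A_i^T A_j + A_j^T A_i = 2 delta_ij: expanding M^T M,
   only the diagonal survives and gives (sum_i alpha_i^2) 1 = |P^T y|^2 1 = 1. *)

Section Continuity.
Variables (R : realType) (n : nat).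

Lemma continuous_sum {T : topologicalType} {V : normedModType R} (I : Type)
    (r : seq I) (F : I -> T -> V) :
  (forall i, continuous (F i)) -> continuous (fun t => \sum_(i <- r) F i t).
Proof.
move=> cF; apply: (@continuous_big V I +%R 0 xpredT) => [|i _]; last exact: cF.
exact: add_continuous.
Qed.

Lemma continuous_inner_mulmx (B : 'M[R]_n) :
  continuous (fun p : 'cV[R]_n * 'cV[R]_n => inner (B *m p.1) p.2).
Proof.
have coord1 l : continuous (fun p : 'cV[R]_n * 'cV[R]_n => p.1 l 0).
  move=> p; apply: (continuous_comp (f := fst) (g := fun M : 'cV[R]_n => M l 0)).
    exact: cvg_fst.
  exact: coord_continuous.
have coord2 k : continuous (fun p : 'cV[R]_n * 'cV[R]_n => p.2 k 0).
  move=> p; apply: (continuous_comp (f := snd) (g := fun M : 'cV[R]_n => M k 0)).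
    exact: cvg_snd.
  exact: coord_continuous.
have entry k : continuous (fun p : 'cV[R]_n * 'cV[R]_n => (B *m p.1) k 0).
  have -> : (fun p : 'cV[R]_n * 'cV[R]_n => (B *m p.1) k 0) =
            fun p => \sum_l B k l * p.1 l 0.
    by apply: funext => p; rewrite mxE.
  apply: continuous_sum => l p; apply: continuousM; last exact: coord1.
  exact: cst_continuous.
apply: continuous_sum => k p; apply: continuousM; [exact: entry | exact: coord2].
Qed.

Lemma Mmap_continuous (A : 'I_n -> 'M[R]_n) : continuous (Mmap A).
Proof.
rewrite /Mmap; apply: continuous_sum => i p.
exact: (continuousZr_tmp (continuous_inner_mulmx (A i) p)).
Qed.

End Continuity.

Lemma trmx_orthogonal_sqrN1 (R : nzRingType) (n : nat) (B : 'M[R]_n) :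
  B^T *m B = 1%:M -> B *m B = - 1%:M -> B^T = - B.
Proof.
move=> BtB BB; have : B^T *m (B *m B) = - B^T by rewrite BB mulmxN mulmx1.
by rewrite mulmxA BtB mul1mx => {2}->; rewrite opprK.
Qed.

Lemma sum_sym_coef_anticomm (R : numFieldType) (m n : nat)
    (c : 'I_m -> 'I_m -> R) (B : 'I_m -> 'I_m -> 'M[R]_n) :
  (forall i j, c i j = c j i) ->
  (forall i j, B i j + B j i = (2 * (i == j)%:R) *: 1%:M) ->
  \sum_i \sum_j c i j *: B i j = (\sum_i c i i) *: 1%:M.
Proof.
move=> c_sym B_anti; apply: (scalerI (a := 2)); first by rewrite pnatr_eq0.
have swap : \sum_i \sum_j c i j *: B i j = \sum_i \sum_j c i j *: B j i.
  rewrite exchange_big; apply: eq_bigr => i _.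
  by apply: eq_bigr => j _; rewrite c_sym.
rewrite scaler_nat mulr2n {2}swap -big_split scalerA mulr_sumr scaler_suml /=.
apply: eq_bigr => i _; rewrite -big_split /= (bigD1 i) //= big1 => [|j ji].
  by rewrite addr0 -scalerDr B_anti eqxx mulr1 scalerA mulrC.
by rewrite -scalerDr B_anti eq_sym (negbTE ji) mulr0 scale0r scaler0.
Qed.

Section Inner.
Variables (R : realType) (n : nat).
Implicit Types (u v : 'cV[R]_n) (B : 'M[R]_n).

Lemma innerE u v : inner u v = (u^T *m v) 0 0.
Proof. by rewrite /inner mxE; apply: eq_bigr => k _; rewrite mxE. Qed.

Lemma innerC u v : inner u v = inner v u.
Proof. by apply: eq_bigr => k _; rewrite mulrC. Qed.

Lemma innerDr u v w : inner u (v + w) = inner u v + inner u w.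
Proof. by rewrite !innerE mulmxDr mxE. Qed.

Lemma innerZr u a v : inner u (a *: v) = a * inner u v.
Proof. by rewrite !innerE -scalemxAr mxE. Qed.

Lemma inner_mulmxl B u v : inner (B *m u) v = inner u (B^T *m v).
Proof. by rewrite !innerE trmx_mul mulmxA. Qed.

Lemma inner_orthogonal B u v :
  orthogonal_mx B -> inner (B *m u) (B *m v) = inner u v.
Proof. by move=> BtB; rewrite inner_mulmxl mulmxA BtB mul1mx. Qed.

End Inner.

Section CliffordFrame.
Variables (R : realType) (n : nat) (A : 'I_n -> 'M[R]_n).
Hypothesis A_orth : forall i : 'I_n, orthogonal_mx (A i).
Hypothesis A0 : forall i : 'I_n, val i = 0%N -> A i = 1%:M.
Hypothesis A_anticomm : forall i j : 'I_n, (0 < val i)%N -> (0 < val j)%N ->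
  A i *m A j + A j *m A i = - ((2 * (i == j)%:R) *: 1%:M).

Lemma trmxA_skew i : (0 < val i)%N -> (A i)^T = - A i.
Proof.
move=> i_gt0; apply: trmx_orthogonal_sqrN1; first exact: A_orth.
apply: (scalerI (a := 2)); first by rewrite pnatr_eq0.
by rewrite scaler_nat mulr2n A_anticomm // eqxx mulr1 -scalerN.
Qed.

Lemma trmxA_mul_anticomm i j :
  (A i)^T *m A j + (A j)^T *m A i = (2 * (i == j)%:R) *: 1%:M.
Proof.
have [i0|i_gt0] := posnP (val i); have [j0|j_gt0] := posnP (val j).
- have -> : i = j by apply: val_inj; rewrite i0 j0.
  by rewrite eqxx mulr1 A_orth scaler_nat.
- have ij : (i == j) = false by apply: contraTF j_gt0 => /eqP <-; rewrite i0.
  by rewrite A0 // trmx1 mul1mx mulmx1 trmxA_skew // subrr ij mulr0 scale0r.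
- have ij : (i == j) = false by apply: contraTF i_gt0 => /eqP ->; rewrite j0.
  rewrite (A0 _ j0) trmx1 mul1mx mulmx1 trmxA_skew // addrC subrr.
  by rewrite ij mulr0 scale0r.
- by rewrite !trmxA_skew // !mulNmx -opprD A_anticomm // opprK.
Qed.

Lemma inner_A_mulmx x i j :
  inner x x = 1 -> inner (A i *m x) (A j *m x) = (i == j)%:R.
Proof.
move=> x_unit; apply: (mulfI (x := 2)); first by rewrite pnatr_eq0.
rewrite mulr2n mulrDl mul1r {2}innerC !inner_mulmxl !mulmxA -innerDr -mulmxDl.
by rewrite trmxA_mul_anticomm -scalemxAl mul1mx innerZr x_unit mulr1.
Qed.

Definition frame_mx (x : 'cV[R]_n) : 'M[R]_n := \matrix_(k, i) (A i *m x) k 0.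

Lemma frame_mx_orthogonal x : inner x x = 1 -> orthogonal_mx (frame_mx x).
Proof.
move=> x_unit; apply/matrixP => i j; rewrite !mxE -(inner_A_mulmx _ _ _ x_unit).
by apply: eq_bigr => k _; rewrite !mxE.
Qed.

Lemma trmx_frame_mul x y : (frame_mx x)^T *m y = \col_i alpha A i x y.
Proof.
apply/matrixP => i j; rewrite !mxE (ord1 j).
by apply: eq_bigr => k _; rewrite !mxE.
Qed.

Lemma Mmap_mulmx x y : Mmap A (x, y) *m x = frame_mx x *m ((frame_mx x)^T *m y).
Proof.
rewrite trmx_frame_mul mulmx_suml; apply/matrixP => k j.
rewrite (ord1 j) summxE !mxE; apply: eq_bigr => i _.
by rewrite -scalemxAl !mxE mulrC.
Qed.

Lemma Mmap_sends x y : inner x x = 1 -> Mmap A (x, y) *m x = y.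
Proof.
move=> x_unit; rewrite Mmap_mulmx mulmxA mulmx1C ?mul1mx //.
exact: frame_mx_orthogonal.
Qed.

Lemma sum_alpha_sqr x y : inner x x = 1 -> inner y y = 1 ->
  \sum_i alpha A i x y * alpha A i x y = 1.
Proof.
move=> x_unit y_unit; rewrite -y_unit -(@inner_orthogonal _ _ (frame_mx x)^T).
  by rewrite trmx_frame_mul; apply: eq_bigr => i _; rewrite !mxE.
by rewrite /orthogonal_mx trmxK mulmx1C //; exact: frame_mx_orthogonal.
Qed.

Lemma Mmap_orthogonal x y : inner x x = 1 -> inner y y = 1 ->
  orthogonal_mx (Mmap A (x, y)).
Proof.
move=> x_unit y_unit; rewrite /orthogonal_mx /Mmap /=.
have -> : (\sum_i alpha A i x y *: A i)^T = \sum_i alpha A i x y *: (A i)^T.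
  by rewrite linear_sum; apply: eq_bigr => i _; rewrite linearZ.
rewrite mulmx_suml (eq_bigr _ (fun i _ => mulmx_sumr _ _ _ _)) /=.
under eq_bigr do under eq_bigr do rewrite -scalemxAl -scalemxAr scalerA.
rewrite (@sum_sym_coef_anticomm _ _ _ _ (fun i j => (A i)^T *m A j)).
- by rewrite sum_alpha_sqr // scale1r.
- by move=> i j; rewrite mulrC.
- exact: trmxA_mul_anticomm.
Qed.

End CliffordFrame.

Theorem lemma2 (R : realType) (n : nat) (hn : (0 < n)%N)
  (A : 'I_n -> 'M[R]_n)
  (hO : forall i : 'I_n, orthogonal_mx (A i))
  (h1 : forall i : 'I_n, val i = 0%N -> A i = 1%:M)
  (hC : forall i j : 'I_n, (0 < val i)%N -> (0 < val j)%N ->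
        A i *m A j + A j *m A i = - ((2 * (i == j)%:R) *: 1%:M)) :
  {within @sphere R n `*` @sphere R n, continuous (Mmap A)} /\
  (forall x y : 'cV[R]_n, @sphere R n x -> @sphere R n y ->
     orthogonal_mx (Mmap A (x, y)) /\ Mmap A (x, y) *m x = y).
Proof.
split; first exact/continuous_subspaceT/Mmap_continuous.
move=> x y x_unit y_unit; split; first exact: Mmap_orthogonal.
exact: Mmap_sends.
Qed.
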